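(* Let $f:\mathbb{Z}_2^\ell\to\mathbb{Z}_2^\ell$ be a randomized bitwise partitioned function, and let $x,z\in\mathbb{Z}_2^\ell$ be fixed bitstrings. Then $G(x,z,f(z)\vdash f(x))\ge 2^{-\Delta(x,z)}$, where $\Delta(x,z)=\#\{i\mid x_i\ne z_i\}$ is the Hamming distance.
   Context: A randomized boolean function $f:\mathbb{Z}_2^m\to\mathbb{Z}_2^n$ is partitioned if $m=m_1+\dots+m_k$, $n=n_1+\dots+n_k$ and $f=f_1::\dots::f_k$ (concatenation of outputs on the corresponding input blocks), with $f_i:\mathbb{Z}_2^{m_i}\to\mathbb{Z}_2^{n_i}$, such that each component is independent of the inputs and outputs of all other components: the advantage of $x_{\bar\imath},f_{\bar\imath}(x_{\bar\imath})$ for guessing $f_i(x_i)$ is zero, where $\bar\imath=\{j\ne i\}$. It is bitwise partitioned if $m=n=\ell$ and $m_i=n_i=1$ for all $i$. $G(\Xi\vdash\Theta)$ is the guessing chance: the maximal probability, over randomized guessing procedures, of outputting $\Theta$ from input $\Xi$, the probability taken over the randomness involved (here the randomness of $f$); advantage of $\Xi$ for $\Theta$ is $G(\Xi\vdash\Theta)-G(\emptyset\vdash\Theta)$. *)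

From HB Require Import structures.
From mathcomp Require Import all_boot all_order all_algebra.
From mathcomp Require Import classical_sets reals.
Set Implicit Arguments. Unset Strict Implicit. Unset Printing Implicit Defensive.
Import Order.TTheory GRing.Theory Num.Theory.
Local Open Scope ring_scope.
Local Open Scope classical_set_scope.

Definition bits (l : nat) := {ffun 'I_l -> bool}.

Definition is_distr {R : realType} {Om : finType} (P : {ffun Om -> R}) : Prop :=
  (forall w, 0 <= P w) /\ \sum_(w : Om) P w = 1.

Definition is_procedure {R : realType} {A B : finType} (q : {ffun A -> {ffun B -> R}}) : Prop :=
  (forall a b, 0 <= q a b) /\ (forall a, \sum_(b : B) q a b = 1).

Definition success {R : realType} {Om A B : finType} (P : {ffun Om -> R})
  (Xi : Om -> A) (Th : Om -> B) (q : {ffun A -> {ffun B -> R}}) : R :=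
  \sum_(w : Om) P w * q (Xi w) (Th w).

Definition guess_chance {R : realType} {Om A B : finType} (P : {ffun Om -> R})
  (Xi : Om -> A) (Th : Om -> B) : R :=
  sup [set r | exists q : {ffun A -> {ffun B -> R}}, is_procedure q /\ r = success P Xi Th q].

Definition advantage {R : realType} {Om A B : finType} (P : {ffun Om -> R})
  (Xi : Om -> A) (Th : Om -> B) : R :=
  guess_chance P Xi Th - guess_chance P (fun _ => tt) Th.

(* A randomized function Z_2^l -> Z_2^l is given by a finite probability
   space (Om, P) and f : Om -> bits l -> bits l.  It is bitwise partitioned if
   (1) f = f_1 :: ... :: f_l with f_i : Z_2 -> Z_2, i.e. (almost surely) output
       bit i depends only on input bit i, and
   (2) for every i and every input x, the advantage of (x_{-i}, f_{-i}(x_{-i}))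
       for guessing f_i(x_i) is zero.  The tuple indexed by the complement of i
       is encoded as an l-indexed tuple with None at position i. *)
Definition bitwise_partitioned {R : realType} {l : nat} {Om : finType}
  (P : {ffun Om -> R}) (f : Om -> bits l -> bits l) : Prop :=
  (forall w, 0 < P w -> forall (i : 'I_l) (u v : bits l), u i = v i -> f w u i = f w v i) /\
  (forall (i : 'I_l) (x : bits l),
     advantage P
       (fun w => [ffun j : 'I_l => if j == i then None else Some (x j, f w x j)])
       (fun w => f w x i) = 0).

Definition hamming {l : nat} (x z : bits l) : nat := #|[set i : 'I_l | x i != z i]|.

(* Guess output bit i by copying bit i of f(z) when x_i = z_i, and by a fair
   coin flip otherwise.  Since output bit i of f depends only on input bit i,
   the copied bits are always right, and the Δ(x,z) coin flips are all right
   with probability 2^-Δ(x,z). *)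
From HB Require Import structures.
From mathcomp Require Import all_boot all_order all_algebra.
From mathcomp Require Import classical_sets reals.
Set Implicit Arguments. Unset Strict Implicit. Unset Printing Implicit Defensive.
Import Order.TTheory GRing.Theory Num.Theory.
Local Open Scope ring_scope.

Section GuessChance.
Variables (R : realType) (Om A B : finType).
Variables (P : {ffun Om -> R}) (Xi : Om -> A) (Th : Om -> B).
Hypothesis P_distr : is_distr P.

Lemma success_le1 (q : {ffun A -> {ffun B -> R}}) :
  is_procedure q -> success P Xi Th q <= 1.
Proof.
case: P_distr => P_ge0 P_sum1 [q_ge0 q_sum1].
rewrite /success -P_sum1; apply: ler_sum => w _.
rewrite -[leRHS]mulr1; apply: ler_wpM2l => //.
rewrite -(q_sum1 (Xi w)) (bigD1 (Th w)) //= lerDl.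
exact: sumr_ge0.
Qed.

Lemma success_le_guess_chance (q : {ffun A -> {ffun B -> R}}) :
  is_procedure q -> success P Xi Th q <= guess_chance P Xi Th.
Proof.
move=> q_proc; apply: ub_le_sup; last by exists q.
by exists 1 => _ [q' [q'_proc ->]]; exact: success_le1.
Qed.

Lemma success_eq_const (q : {ffun A -> {ffun B -> R}}) (c : R) :
  (forall w, 0 < P w -> q (Xi w) (Th w) = c) -> success P Xi Th q = c.
Proof.
case: P_distr => P_ge0 P_sum1 q_const.
rewrite /success -[RHS]mul1r -P_sum1 mulr_suml; apply: eq_bigr => w _.
have [->|Pw_neq0] := eqVneq (P w) 0; first by rewrite !mul0r.
by rewrite q_const // lt0r Pw_neq0 P_ge0.
Qed.

End GuessChance.

Section ProductKernel.
Variables (R : realType) (A : finType) (l : nat).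

Definition prod_kernel (k : A -> 'I_l -> bool -> R) :
    {ffun A -> {ffun bits l -> R}} :=
  [ffun a => [ffun b : bits l => \prod_i k a i (b i)]].

Lemma prod_kernel_procedure (k : A -> 'I_l -> bool -> R) :
  (forall a i j, 0 <= k a i j) -> (forall a i, \sum_j k a i j = 1) ->
  is_procedure (prod_kernel k).
Proof.
move=> k_ge0 k_sum1; split=> [a b|a].
  by rewrite !ffunE; apply: prodr_ge0.
under eq_bigr do rewrite !ffunE.
by rewrite -bigA_distr_bigA big1.
Qed.

End ProductKernel.

Section CopyOrFlip.
Variables (R : realType) (l : nat).

Definition copy_or_flip (a : bits l * bits l * bits l) (i : 'I_l) (j : bool) : R :=
  if a.1.1 i == a.1.2 i then (j == a.2 i)%:R else 2%:R^-1.

Lemma copy_or_flip_ge0 a i j : 0 <= copy_or_flip a i j.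
Proof. by rewrite /copy_or_flip; case: ifP => _; rewrite ?invr_ge0 ler0n. Qed.

Lemma copy_or_flip_sum1 a i : \sum_j copy_or_flip a i j = 1.
Proof.
rewrite big_bool /copy_or_flip /=; case: ifP => _.
  by case: (a.2 i); rewrite /= ?addr0 ?add0r.
by rewrite -mulr2n -[_ *+ 2]mulr_natr mulVf ?pnatr_eq0.
Qed.

Lemma copy_or_flip_procedure : is_procedure (prod_kernel copy_or_flip).
Proof.
exact: prod_kernel_procedure copy_or_flip_ge0 copy_or_flip_sum1.
Qed.

Lemma hammingE (x z : bits l) : hamming x z = #|[pred i | x i != z i]|.
Proof. by apply: eq_card => i; rewrite inE; apply/idP/idP => [/set_mem|/mem_set]. Qed.

Lemma prod_kernel_copy_or_flip (x z y y' : bits l) :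
  (forall i, x i = z i -> y i = y' i) ->
  prod_kernel copy_or_flip (x, z, y') y = (2%:R ^+ hamming x z)^-1.
Proof.
move=> copy_ok; rewrite hammingE -exprVn -prodr_const [RHS]big_mkcond !ffunE.
apply: eq_bigr => i _; rewrite /copy_or_flip /= inE.
by case: eqP => //= /copy_ok ->; rewrite eqxx.
Qed.

End CopyOrFlip.

Theorem proposition5p2 (R : realType) (l : nat) (Om : finType)
  (P : {ffun Om -> R}) (f : Om -> bits l -> bits l) (x z : bits l) :
  is_distr P -> bitwise_partitioned P f ->
  (2%:R ^+ hamming x z)^-1 <= guess_chance P (fun w => (x, z, f w z)) (fun w => f w x).
Proof.
move=> P_distr [f_bitwise _].
have <- : success P (fun w => (x, z, f w z)) (fun w => f w x)
    (prod_kernel (@copy_or_flip R l)) = (2%:R ^+ hamming x z)^-1.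
  apply: success_eq_const => // w Pw_gt0.
  by apply: prod_kernel_copy_or_flip => i; apply: f_bitwise.
by apply: success_le_guess_chance => //; apply: copy_or_flip_procedure.
Qed.
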